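(* Consider the optimal clique cover delivery problem for a system with $K$ users and a set $\mathcal{W}$ of subfiles to be delivered. The Size-Aware Coded Multicast (SACM) algorithm, defined as follows, achieves a $(1+\log K)$-approximation to this problem (its output is a set of cliques covering $\mathcal{W}$ whose total size is at most $(1+\log K)$ times the optimal value). SACM: set $\mathscr{C}=\emptyset$, $\mathcal{E}=\mathcal{W}$; while $\mathcal{E}\neq\emptyset$: compute $\mathcal{P}^*=\mathrm{SBO}(\mathcal{E})$, set $\mathscr{C}=\mathscr{C}\cup\{\mathcal{P}^*\}$ and $\mathcal{E}=\mathcal{E}\setminus\mathcal{P}^*$; output $\mathscr{C}$. Here $\mathrm{SBO}(\mathcal{E})$ is computed as: let $\mathcal{M}=\{k\in[K]: W_{k,\mathcal{A}}\in\mathcal{E}\text{ for some }\mathcal{A}\}$ and $\mathscr{T}$ the set of nonempty subsets of $\mathcal{M}$; for each $\mathcal{T}\in\mathscr{T}$ and $j\in\mathcal{T}$ let $\mathcal{L}_{j,\mathcal{T}}=\{W_{j,\mathcal{A}}\in\mathcal{E}:\mathcal{T}\setminus\{j\}\subseteq\mathcal{A}\}$ (replaced by $\{W_*\}$ with $\|W_*\|=\infty$ if empty), let $V_{j,\mathcal{T}}$ be an element of $\mathcal{L}_{j,\mathcal{T}}$ of minimum size (ties arbitrary), and $\mathcal{R}_{\mathcal{T}}=\{V_{j,\mathcal{T}}:j\in\mathcal{T}\}$ with $\|\mathcal{R}_{\mathcal{T}}\|=\max_{j\in\mathcal{T}}\|V_{j,\mathcal{T}}\|$; return a set $\mathcal{R}_{\mathcal{T}}$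 maximizing $|\mathcal{T}|/\|\mathcal{R}_{\mathcal{T}}\|$ over $\mathcal{T}\in\mathscr{T}$ (ties arbitrary).
   Context: Setting: a server and $K$ users, $[K]=\{1,\dots,K\}$; user $k$ requests file $W_k$. For $k\in[K]$ and $\mathcal{A}\subseteq[K]\setminus\{k\}$, $W_{k,\mathcal{A}}$ denotes the subfile of $W_k$ consisting of the bits cached exactly by the users in $\mathcal{A}$, and $\|W_{k,\mathcal{A}}\|$ is its size in bits (arbitrary nonnegative integers). The set of subfiles to be delivered is $\mathcal{W}=\{W_{k,\mathcal{A}}: k\in[K],\ \mathcal{A}\subseteq[K]\setminus\{k\},\ \|W_{k,\mathcal{A}}\|\neq 0\}$. A clique (feasible packet) is a nonempty set $\mathcal{P}\subseteq\mathcal{W}$ of the form $\{W_{k,\mathcal{A}_k}:k\in\mathcal{M}'\}$ for some $\mathcal{M}'\subseteq[K]$ (at most one subfile per user) such that $k\in\mathcal{A}_{k'}$ for all distinct $k,k'\in\mathcal{M}'$; it models sending the bitwise XOR of its subfiles (zero-padded to the longest one). Its size is $\|\mathcal{P}\|=\max_{W\in\mathcal{P}}\|W\|$. The optimal clique cover delivery problem: choose a set of cliques whose union is $\mathcal{W}$ minimizing the sum of their sizes. *)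

From HB Require Import structures.
From mathcomp Require Import all_boot all_order all_algebra.
From mathcomp Require Import reals exp.
Set Implicit Arguments. Unset Strict Implicit. Unset Printing Implicit Defensive.
Import Order.TTheory GRing.Theory Num.Theory.
Local Open Scope ring_scope.

(* Users are 'I_K.  The subfile W_{k,A} is encoded by the pair (k, A).
   Sizes: sz k A = ||W_{k,A}|| in bits (arbitrary nonnegative integers). *)
Notation subfile K := ('I_K * {set 'I_K})%type.

Section Clique.
Variables (K : nat) (sz : 'I_K -> {set 'I_K} -> nat).

Definition fsize (x : subfile K) : nat := sz x.1 x.2.

Definition Wset : {set subfile K} :=
  [set x : subfile K | (x.1 \notin x.2) && (fsize x != 0%N)].

Definition is_clique (P : {set subfile K}) : bool :=
  [&& P != set0, P \subset Wset,
      [forall x in P, forall y in P, (x.1 == y.1) ==> (x == y)]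
    & [forall x in P, forall y in P, (x.1 != y.1) ==> (x.1 \in y.2)]].

Definition clique_size (P : {set subfile K}) : nat := (\max_(x in P) fsize x)%N.

Definition is_clique_cover (C : {set {set subfile K}}) : bool :=
  [forall P in C, is_clique P] && (\bigcup_(P in C) P == Wset).

Definition cover_cost (C : {set {set subfile K}}) : nat :=
  (\sum_(P in C) clique_size P)%N.

Definition users (E : {set subfile K}) : {set 'I_K} :=
  [set k | [exists A, (k, A) \in E]].

Definition Lset (E : {set subfile K}) (j : 'I_K) (T : {set 'I_K}) :
  {set {set 'I_K}} := [set A | ((j, A) \in E) && (T :\ j \subset A)].

(* V : 'I_K -> option {set 'I_K} is a valid choice of the V_{j,T}, j in T:
   None encodes the dummy W_* of infinite size (L_{j,T} empty), otherwise
   V j = Some A with W_{j,A} an element of L_{j,T} of minimum size. *)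
Definition valid_choice (E : {set subfile K}) (T : {set 'I_K})
    (V : 'I_K -> option {set 'I_K}) : Prop :=
  forall j, j \in T ->
    match V j with
    | None => Lset E j T = set0
    | Some A => A \in Lset E j T /\
                (forall B, B \in Lset E j T -> (sz j A <= sz j B)%N)
    end.

(* |T| / ||R_T||, with ratio 0 when ||R_T|| = infinity *)
Definition ratio (T : {set 'I_K}) (V : 'I_K -> option {set 'I_K}) : rat :=
  if [forall j in T, V j != None] then
    (#|T|%:R / (\max_(j in T) (if V j is Some A then sz j A else 0%N))%N%:R)
  else 0.

Definition Rset (T : {set 'I_K}) (V : 'I_K -> option {set 'I_K}) :
  {set subfile K} :=
  [set x : subfile K | (x.1 \in T) && (V x.1 == Some x.2)].

(* P is a possible output of SBO(E) (for some tie-breaking). *)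
Definition SBO_out (E : {set subfile K}) (P : {set subfile K}) : Prop :=
  exists (T : {set 'I_K}) (V : 'I_K -> option {set 'I_K}),
    [/\ T \subset users E, T != set0, valid_choice E T V,
        (forall (T' : {set 'I_K}) (V' : 'I_K -> option {set 'I_K}), T' \subset users E -> T' != set0 ->
           valid_choice E T' V' -> ratio T' V' <= ratio T V)
      & P = Rset T V].

(* A complete run of the while-loop of SACM starting from E = E0,
   producing the successive packets P_1, ..., P_n. *)
Fixpoint sacm_run (E : {set subfile K}) (Ps : seq {set subfile K}) : Prop :=
  match Ps with
  | [::] => E = set0
  | P :: Ps' => E != set0 /\ SBO_out E P /\ sacm_run (E :\: P) Ps'
  end.

Definition sacm_output (Ps : seq {set subfile K}) : {set {set subfile K}} :=
  [set P | P \in Ps].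

End Clique.

(** SBO returns a packet maximising (number of
    subfiles served) / (packet size), and for every clique S of a cover C the
    subfiles of S still pending form a candidate of ratio at least
    |S ∩ E| / ||S||.  Hence the potential Σ_{S ∈ C} ||S|| H(|S ∩ E|), with H the
    harmonic numbers, drops by at least ||P|| whenever a packet P is sent; it
    starts at most Σ_S ||S|| H(K) <= (1 + ln K) Σ_S ||S|| and is nonnegative. *)

From Pilot Require Import Defs.
From HB Require Import structures.
From mathcomp Require Import all_boot all_order all_algebra.
From mathcomp Require Import reals exp.
From mathcomp Require Import ring lra zify.
Set Implicit Arguments. Unset Strict Implicit. Unset Printing Implicit Defensive.
Import Order.TTheory GRing.Theory Num.Theory.
Local Open Scope ring_scope.

Section HarmonicNumbers.
Variable R : realType.

Definition harmonic_number (n : nat) : R := \sum_(i < n) i.+1%:R^-1.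

Lemma harmonic_numberS n : harmonic_number n.+1 = harmonic_number n + n.+1%:R^-1.
Proof. by rewrite /harmonic_number big_ord_recr. Qed.

Lemma harmonic_number_ge0 n : 0 <= harmonic_number n.
Proof. by apply: sumr_ge0 => i _; rewrite invr_ge0 ler0n. Qed.

Lemma ler_harmonic_number : {homo harmonic_number : m n / (m <= n)%N >-> m <= n}.
Proof.
apply: (homo_leq lexx le_trans) => n.
by rewrite harmonic_numberS lerDl invr_ge0 ler0n.
Qed.

Lemma invS_le_ln_succ n : (0 < n)%N -> n.+1%:R^-1 <= ln (n.+1%:R : R) - ln n%:R.
Proof.
move=> n_gt0; have n1_neq0 : (n.+1%:R : R) != 0 by rewrite pnatr_eq0.
have : ln (1 - (n.+1%:R : R)^-1) <= - n.+1%:R^-1.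
  by apply: le_ln1Dx; rewrite ltrN2 invf_lt1 // ltr1n ltnS.
have -> : 1 - (n.+1%:R : R)^-1 = n%:R / n.+1%:R.
  by move: n1_neq0; rewrite -natr1 => ?; field.
by rewrite ln_div ?posrE ?ltr0n // lerNr opprB.
Qed.

Lemma harmonic_number_le_ln n : harmonic_number n <= 1 + ln (n%:R : R).
Proof.
elim: n => [|[|n] IH]; first by rewrite /harmonic_number big_ord0 ln0 ?addr0.
  by rewrite harmonic_numberS /harmonic_number big_ord0 ln1 invr1 add0r addr0.
rewrite harmonic_numberS; have := invS_le_ln_succ (ltn0Sn n).
by move: IH; set x := _^-1; set y := ln _; set z := ln _; lra.
Qed.

Lemma harmonic_number_subn d a :
  (d <= a)%N -> d%:R / a%:R + harmonic_number (a - d) <= harmonic_number a.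
Proof.
elim: d => [|d IH] le_da; first by rewrite mul0r add0r subn0.
have a_gt0 : (0 < a)%N by apply: leq_trans le_da.
have := IH (ltnW le_da); rewrite -(subnSK le_da) harmonic_numberS (subnSK le_da).
have : (a%:R : R)^-1 <= (a - d)%:R^-1.
  by rewrite lef_pV2 ?posrE ?ltr0n ?subn_gt0 // ler_nat leq_subr.
rewrite -natr1 mulrDl mul1r; lra.
Qed.
End HarmonicNumbers.

(* Share of one clique of size c' with a of its subfiles pending when d of them
   are sent at price c/n each, greediness giving c/n <= c'/a. *)
Lemma harmonic_potential_drop (R : realType) (c n c' a d : nat) :
  (0 < n)%N -> (d <= a)%N -> (c * a <= n * c')%N ->
  c%:R / n%:R * d%:R + c'%:R * harmonic_number R (a - d)
    <= c'%:R * harmonic_number R a.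
Proof.
move=> n_gt0 le_da le_ca; have [a0|a_gt0] := posnP a.
  by move: le_da; rewrite a0 leqn0 => /eqP ->; rewrite mulr0 add0r.
have le_cn : c%:R / n%:R <= c'%:R / a%:R :> R.
  by rewrite ler_pdivrMr ?ltr0n // mulrAC ler_pdivlMr ?ltr0n // -!natrM ler_nat [(c' * n)%N]mulnC.
apply: (@le_trans _ _ (c'%:R * (d%:R / a%:R) + c'%:R * harmonic_number R (a - d))).
  by rewrite lerD2r mulrA [c'%:R * _ * _]mulrAC; apply: ler_wpM2r.
by rewrite -mulrDr; apply: ler_wpM2l => //; apply: harmonic_number_subn.
Qed.

Lemma card_le_sum_card_cover (T : finType) (A : {set T}) (C : {set {set T}}) :
  A \subset \bigcup_(S in C) S -> (#|A| <= \sum_(S in C) #|S :&: A|)%N.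
Proof.
move=> AC; have -> : #|A| = #|\bigcup_(S in C) (S :&: A)|.
  by rewrite -big_distrl /= (setIidPr AC).
apply: (big_ind2 (fun (B : {set T}) n => #|B| <= n)%N) => [|B1 n1 B2 n2 le1 le2|//].
  by rewrite cards0.
by rewrite cardsU (leq_trans (leq_subr _ _)) ?leq_add.
Qed.

Section SACM.
Variables (K : nat) (sz : 'I_K -> {set 'I_K} -> nat).
Implicit Types (x : subfile K) (E P S : {set subfile K}) (T : {set 'I_K}).
Implicit Types (V : 'I_K -> option {set 'I_K}).

Lemma fsize_gt0 x : x \in Wset sz -> (0 < fsize sz x)%N.
Proof. by rewrite inE lt0n => /andP[]. Qed.

Lemma clique_size_gt0 S x : x \in S -> x \in Wset sz -> (0 < clique_size sz S)%N.
Proof. by move=> xS /fsize_gt0 /leq_trans; apply; apply: leq_bigmax_cond. Qed.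

Lemma clique_inj S : is_clique sz S -> {in S &, injective (fun x : subfile K => x.1)}.
Proof.
case/and4P => _ _ /forall_inP Sinj _ x y xS yS /= xy.
by apply/eqP; move/forall_inP: (Sinj x xS) => /(_ y yS); rewrite xy eqxx.
Qed.

Lemma clique_adj S x y : is_clique sz S -> x \in S -> y \in S -> x.1 != y.1 -> x.1 \in y.2.
Proof.
case/and4P => _ _ _ /forall_inP Sadj xS yS xy.
by move/forall_inP: (Sadj x xS) => /(_ y yS); rewrite xy.
Qed.

Lemma clique_card S : is_clique sz S -> (#|S| <= K)%N.
Proof.
move=> Scl; rewrite -(card_in_imset (clique_inj Scl)).
by rewrite (leq_trans (max_card _)) ?card_ord.
Qed.

Lemma clique_set1 x : x \in Wset sz -> is_clique sz [set x].
Proof.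
move=> xW; apply/and4P; split; first by apply/set0Pn; exists x; rewrite set11.
- by rewrite sub1set.
- by apply/forall_inP => _ /set1P ->; apply/forall_inP => _ /set1P ->; rewrite !eqxx.
- by apply/forall_inP => _ /set1P ->; apply/forall_inP => _ /set1P ->; rewrite !eqxx.
Qed.

Definition min_choice E T j : option {set 'I_K} :=
  if [pick A in Lset E j T] is Some A0
  then Some [arg min_(B < A0 in Lset E j T) sz j B] else None.

Lemma min_choice_valid E T : valid_choice sz E T (min_choice E T).
Proof.
move=> j _; rewrite /min_choice; case: pickP => [A0 LA0|L0].
  by case: arg_minnP.
by apply/setP => A; rewrite in_set0 L0.
Qed.

Definition choice_size T V : nat :=
  (\max_(j in T) (if V j is Some A then sz j A else 0))%N.

Lemma ratio_valid_choice E T V V' :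
  valid_choice sz E T V -> valid_choice sz E T V' -> Defs.ratio sz T V = Defs.ratio sz T V'.
Proof.
move=> HV HV'.
have same j : j \in T -> (V j != None) = (V' j != None) /\
    (if V j is Some A then sz j A else 0) = (if V' j is Some A then sz j A else 0) :> nat.
  move=> jT; move: (HV j jT) (HV' j jT).
  case: (V j) => [A [LA minA]|L0]; case: (V' j) => [B [LB minB]|L0'] //.
  - by split => //; apply/eqP; rewrite eqn_leq minA // minB.
  - by rewrite L0' inE in LA.
  - by rewrite L0 inE in LB.
rewrite /Defs.ratio (eq_forallb_in (fun j jT => proj1 (same j jT))).
by rewrite (eq_bigr _ (fun j jT => proj2 (same j jT))).
Qed.

Lemma ratio_gt0P T V : 0 < Defs.ratio sz T V ->
  [/\ forall j, j \in T -> V j != None, (0 < choice_size T V)%N &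
      Defs.ratio sz T V = #|T|%:R / (choice_size T V)%:R].
Proof.
rewrite /Defs.ratio; case: ifP => [/forall_inP Vsome r_gt0|]; last by rewrite ltxx.
split=> //; rewrite lt0n; apply: contraTneq r_gt0; rewrite /choice_size => ->.
by rewrite invr0 mulr0 ltxx.
Qed.

Lemma ratio_ge T V b : T != set0 ->
  (forall j, j \in T -> exists2 A, V j = Some A & (0 < sz j A <= b)%N) ->
  #|T|%:R / b%:R <= Defs.ratio sz T V.
Proof.
move=> /set0Pn[j0 j0T] Vb; rewrite /Defs.ratio ifT; last first.
  by apply/forall_inP => j /Vb[A ->].
have m_gt0 : (0 < choice_size T V)%N.
  have [A VA /andP[A_gt0 _]] := Vb j0 j0T.
  apply: leq_trans A_gt0 (leq_trans _ (leq_bigmax_cond _ j0T)); by rewrite VA.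
apply: ler_wpM2l => //; rewrite lef_pV2 ?posrE ?ltr0n ?ler_nat //.
  by apply/bigmax_leqP => j /Vb[A -> /andP[]].
by apply: leq_trans m_gt0 _; apply/bigmax_leqP => j /Vb[A -> /andP[]].
Qed.

Lemma Rset_sub E T V : valid_choice sz E T V -> Rset T V \subset E.
Proof.
move=> HV; apply/subsetP => -[j A]; rewrite inE /= => /andP[jT /eqP VA].
by have := HV j jT; rewrite VA inE => -[/andP[]].
Qed.

Lemma Rset_clique E T V : E \subset Wset sz -> valid_choice sz E T V -> T != set0 ->
  (forall j, j \in T -> V j != None) -> is_clique sz (Rset T V).
Proof.
move=> EW HV /set0Pn[j0 j0T] Vsome; apply/and4P; split.
- move: (Vsome j0 j0T); case VA: (V j0) => [A|] // _.
  by apply/set0Pn; exists (j0, A); rewrite inE /= j0T VA eqxx.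
- exact: subset_trans (Rset_sub HV) EW.
- apply/forall_inP => -[i A]; rewrite inE /= => /andP[_ /eqP ViA].
  apply/forall_inP => -[j B]; rewrite inE /= => /andP[_ /eqP VjB].
  by apply/implyP => /eqP ij; move: VjB; rewrite -ij ViA => -[->].
- apply/forall_inP => -[i A]; rewrite inE /= => /andP[iT _].
  apply/forall_inP => -[j B]; rewrite inE /= => /andP[jT /eqP VjB].
  apply/implyP => ij; have := HV j jT; rewrite VjB inE => -[/andP[_ /subsetP]].
  by move=> TB _; apply: TB; rewrite !inE ij.
Qed.

Lemma card_Rset T V : (forall j, j \in T -> V j != None) -> #|Rset T V| = #|T|.
Proof.
move=> Vsome; pose f j := (j, odflt set0 (V j)).
have f_inj : injective f by move=> i j [].
suff -> : Rset T V = f @: T by rewrite card_imset.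
apply/setP => -[j A]; rewrite inE /=; apply/andP/imsetP.
  by case=> jT /eqP VA; exists j => //; rewrite /f VA.
by case=> i iT [-> ->]; move: (Vsome i iT); case: (V i).
Qed.

Lemma clique_size_Rset T V : (clique_size sz (Rset T V) <= choice_size T V)%N.
Proof.
apply/bigmax_leqP => x; rewrite inE => /andP[xT /eqP VA].
by apply: leq_trans (leq_bigmax_cond _ xT); rewrite /fsize VA.
Qed.

Lemma clique_candidate E S : E \subset Wset sz -> is_clique sz S -> S :&: E != set0 ->
  exists T : {set 'I_K}, [/\ T \subset users E, T != set0 &
    #|S :&: E|%:R / (clique_size sz S)%:R <= Defs.ratio sz T (min_choice E T)].
Proof.
move=> EW Scl /set0Pn[x0 x0SE]; set T := [set x.1 | x in S :&: E].
have T0 : T != set0 by apply/set0Pn; exists x0.1; apply: imset_f.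
exists T; split=> //.
  apply/subsetP => _ /imsetP[x /setIP[_ xE] ->]; rewrite inE.
  by apply/existsP; exists x.2; rewrite -surjective_pairing.
have -> : #|S :&: E| = #|T|.
  by apply/esym/card_in_imset => x y /setIP[xS _] /setIP[yS _]; apply: (clique_inj Scl).
apply: ratio_ge => // _ /imsetP[x xSE ->].
have [xS xE] := setIP xSE.
have xL : x.2 \in Lset E x.1 T.
  rewrite inE -surjective_pairing xE; apply/subsetP => j.
  rewrite !inE => /andP[jx /imsetP[y /setIP[yS _] jy]].
  by rewrite jy; apply: clique_adj Scl yS xS _; rewrite -jy.
have := @min_choice_valid E T x.1 (imset_f _ xSE).
case: (min_choice E T x.1) => [B [LB minB]|L0]; last by rewrite L0 inE in xL.
exists B => //; apply/andP; split.
  by move: LB; rewrite inE => /andP[/(subsetP EW) /fsize_gt0].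
by apply: leq_trans (minB _ xL) _; apply: leq_bigmax_cond.
Qed.

Lemma SBO_out_spec E P : E \subset Wset sz -> E != set0 -> SBO_out sz E P ->
  [/\ is_clique sz P, P \subset E &
      forall S, is_clique sz S ->
        (clique_size sz P * #|S :&: E| <= #|P| * clique_size sz S)%N].
Proof.
move=> EW /set0Pn[x xE] [T [V [TU T0 HV Vmax ->]]].
have cand_le S : is_clique sz S -> S :&: E != set0 ->
    #|S :&: E|%:R / (clique_size sz S)%:R <= Defs.ratio sz T V.
  move=> Scl SE; have [T' [T'U T'0 le_T']] := clique_candidate EW Scl SE.
  exact: le_trans le_T' (Vmax _ _ T'U T'0 (@min_choice_valid E T')).
have xW := subsetP EW x xE.
(* A positive ratio rules out the dummy W_* of infinite size (ratio 0) in V. *)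
have r_gt0 : 0 < Defs.ratio sz T V.
  have xSE : [set x] :&: E != set0 by apply/set0Pn; exists x; rewrite !inE eqxx.
  apply: lt_le_trans (cand_le _ (clique_set1 xW) xSE).
  by rewrite divr_gt0 ?ltr0n ?card_gt0 // (clique_size_gt0 (set11 x) xW).
have [Vsome m_gt0 rE] := ratio_gt0P r_gt0.
split; [exact: Rset_clique EW HV T0 Vsome | exact: Rset_sub HV | move=> S Scl].
have [->|SE] := eqVneq (S :&: E) set0; first by rewrite cards0 muln0.
have c_gt0 : (0 < clique_size sz S)%N.
  by case/set0Pn: SE => y /setIP[yS /(subsetP EW)]; apply: clique_size_gt0.
have := cand_le S Scl SE; rewrite rE ler_pdivlMr ?ltr0n // mulrAC.
rewrite ler_pdivrMr ?ltr0n // -!natrM ler_nat card_Rset //.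
rewrite mulnC; apply: leq_trans; exact: leq_mul (clique_size_Rset T V) (leqnn _).
Qed.

Lemma SBO_exists E : E != set0 -> exists P, SBO_out sz E P.
Proof.
case/set0Pn => x xE.
pose F T := Defs.ratio sz T (min_choice E T).
pose cand T := (T \subset users E) && (T != set0).
have x1 : cand [set x.1].
  rewrite /cand sub1set inE; apply/andP; split; last by apply/set0Pn; exists x.1; rewrite set11.
  by apply/existsP; exists x.2; rewrite -surjective_pairing.
case: (arg_maxP (P := cand) F x1) => T /andP[TU T0] Tmax.
exists (Rset T (min_choice E T)), T, (min_choice E T); split=> // [|T' V' T'U T'0 HV'].
  exact: min_choice_valid.
rewrite (ratio_valid_choice HV' (@min_choice_valid E T')); apply: Tmax; exact/andP.
Qed.

Lemma sacm_run_spec E Ps : E \subset Wset sz -> sacm_run sz E Ps ->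
  [/\ {in Ps, forall P, is_clique sz P}, \bigcup_(P <- Ps) P = E & uniq Ps].
Proof.
elim: Ps E => [|P Ps IH] E EW /=; first by move=> ->; rewrite big_nil.
case=> E0 [/(SBO_out_spec EW E0)[Pcl PE _] run].
have [Pscl PsU Psuniq] := IH _ (subset_trans (subsetDl E P) EW) run.
split.
- by move=> Q /predU1P[->|/Pscl].
- by rewrite big_cons PsU -[RHS](setID E P) (setIidPr PE).
rewrite Psuniq andbT; apply: contraTN Pcl => PPs.
have : P \subset E :\: P by rewrite -PsU (big_rem _ PPs) subsetUl.
move/subsetP=> PEP; apply/negP => /and4P[/set0Pn[y yP] _ _ _].
by have := PEP y yP; rewrite inE yP.
Qed.

Lemma sacm_run_exists E : E \subset Wset sz -> exists Ps, sacm_run sz E Ps.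
Proof.
move: {2}#|E| (leqnn #|E|) => n; elim: n E => [|n IH] E leEn EW.
  by exists [::]; apply/eqP; rewrite -cards_eq0 -leqn0.
have [->|E0] := eqVneq E set0; first by exists [::].
have [P SBO] := SBO_exists E0.
have [/and4P[P0 _ _ _] PE _] := SBO_out_spec EW E0 SBO.
have [|Ps run] := IH (E :\: P) _ (subset_trans (subsetDl _ _) EW).
  by rewrite cardsD (setIidPr PE); move: P0; rewrite -card_gt0; lia.
by exists (P :: Ps).
Qed.

Section Potential.
Variable R : realType.

Definition potential (C : {set {set subfile K}}) E : R :=
  \sum_(S in C) (clique_size sz S)%:R * harmonic_number R #|S :&: E|.

Lemma potential_step C E P : is_clique_cover sz C -> E \subset Wset sz ->
  P \subset E -> P != set0 ->
  (forall S, S \in C -> (clique_size sz P * #|S :&: E| <= #|P| * clique_size sz S)%N) ->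
  (clique_size sz P)%:R + potential C (E :\: P) <= potential C E.
Proof.
case/andP=> _ /eqP CU EW PE P0 greedy.
have n_gt0 : (0 < #|P|)%N by rewrite card_gt0.
have drop S : S \in C ->
    (clique_size sz P)%:R / #|P|%:R * #|S :&: P|%:R
      + (clique_size sz S)%:R * harmonic_number R #|S :&: (E :\: P)|
    <= (clique_size sz S)%:R * harmonic_number R #|S :&: E|.
  move=> SC; rewrite setIDA cardsD -setIA (setIidPr PE).
  by apply: harmonic_potential_drop; rewrite ?subset_leq_card ?setIS ?greedy.
have cover : (#|P| <= \sum_(S in C) #|S :&: P|)%N.
  by apply: card_le_sum_card_cover; rewrite CU (subset_trans PE EW).
apply: le_trans (ler_sum _ drop); rewrite big_split /= -mulr_sumr -natr_sum lerD2r.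
by rewrite mulrAC ler_pdivlMr ?ltr0n // -!natrM ler_nat leq_mul2l cover orbT.
Qed.

Lemma sacm_run_cost C E Ps : is_clique_cover sz C -> E \subset Wset sz ->
  sacm_run sz E Ps -> (\sum_(P <- Ps) clique_size sz P)%:R <= potential C E.
Proof.
move=> Ccov; have /andP[/forall_inP Ccl _] := Ccov.
elim: Ps E => [|P Ps IH] E EW /=.
  move=> _; rewrite big_nil; apply: sumr_ge0 => S _.
  by rewrite mulr_ge0 ?harmonic_number_ge0.
case=> E0 [SBO run]; have [/and4P[P0 _ _ _] PE greedy] := SBO_out_spec EW E0 SBO.
rewrite big_cons natrD; apply: le_trans (potential_step Ccov EW PE P0 _).
  by rewrite lerD2l IH // (subset_trans (subsetDl _ _) EW).
by move=> S /Ccl /greedy.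
Qed.

Lemma potential_le_cost C E : is_clique_cover sz C ->
  potential C E <= (1 + ln (K%:R : R)) * (cover_cost sz C)%:R.
Proof.
case/andP=> /forall_inP Ccl _; rewrite /cover_cost natr_sum mulr_sumr.
apply: ler_sum => S SC; rewrite mulrC; apply: ler_wpM2r => //.
apply: le_trans (harmonic_number_le_ln R K); apply: ler_harmonic_number.
exact: leq_trans (subset_leq_card (subsetIl _ _)) (clique_card (Ccl S SC)).
Qed.
End Potential.
End SACM.

Lemma big_sacm_output (K : nat) (T : Type) (idx : T) (op : Monoid.com_law idx)
    (F : {set subfile K} -> T) Ps :
  uniq Ps -> \big[op/idx]_(P in sacm_output Ps) F P = \big[op/idx]_(P <- Ps) F P.
Proof. by move=> Ps_uniq; rewrite big_uniq //; apply: eq_bigl => P; rewrite inE. Qed.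

Theorem theorem2 (R : realType) (K : nat) (sz : 'I_K -> {set 'I_K} -> nat) :
  (exists Ps, sacm_run sz (Wset sz) Ps) /\
  forall Ps, sacm_run sz (Wset sz) Ps ->
    is_clique_cover sz (sacm_output Ps) /\
    forall C : {set {set subfile K}}, is_clique_cover sz C ->
      ((cover_cost sz (sacm_output Ps))%:R : R)
        <= (1 + ln (K%:R : R)) * (cover_cost sz C)%:R.
Proof.
split=> [|Ps run]; first exact: sacm_run_exists.
have [Pscl PsU Ps_uniq] := sacm_run_spec (subxx _) run.
split=> [|C Ccov].
  apply/andP; split; last by rewrite big_sacm_output // PsU.
  by apply/forall_inP => P; rewrite inE => /Pscl.
rewrite /cover_cost big_sacm_output //.
exact: le_trans (sacm_run_cost R Ccov (subxx _) run) (potential_le_cost R _ Ccov).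
Qed.
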